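(* Let $0<\alpha<1/2$. Then, as $N\to\infty$ through positive integers, \[ \frac{1}{N}\sum_{m,n=1}^{N}\frac{(m,n)^{2\alpha}}{(mn)^{\alpha}} = \frac{\zeta(2-2\alpha)}{\zeta(2)(1-\alpha)^2}\,N^{1-2\alpha}+O(1), \] where the implied constant depends only on $\alpha$.
   Context: $(m,n)$ denotes the greatest common divisor of $m$ and $n$, and $\zeta$ is the Riemann zeta function. *)

From HB Require Import structures.
From mathcomp Require Import all_boot all_order all_algebra.
From mathcomp Require Import all_classical all_reals all_analysis.
Set Implicit Arguments. Unset Strict Implicit. Unset Printing Implicit Defensive.
Import Order.TTheory GRing.Theory Num.Theory.
Local Open Scope ring_scope.

(* Riemann zeta function at a real argument s (meaningful for s > 1):
   zeta s = \sum_{k >= 1} k^{-s}, as the limit of partial sums. *)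
Definition zeta_real {R : realType} (s : R) : R :=
  limn (fun n : nat => \sum_(1 <= k < n) ((k%:R : R) `^ (- s))).

From HB Require Import structures.
From mathcomp Require Import all_boot all_order all_algebra.
From mathcomp Require Import all_classical all_reals all_analysis.
From mathcomp Require Import ring lra zify.
Import Order.TTheory GRing.Theory Num.Theory numFieldNormedType.Exports.
Local Open Scope ring_scope.

(* Write g^(2a) = sum_(d | g) J(d), with J = J_(2a) Jordan's totient. Exchanging
   the sums gives S(N) = sum_(k <= N) J(k) k^(-2a) F(N/k)^2 with
   F(x) = sum_(n <= x) n^(-a) = x^(1-a)/(1-a) + O(1), where the O(1) comes from
   comparing F with the tangent lines of the concave map t |-> t^(1-a). Since
   J(k) <= k^(2a), the errors add up to O(N^(1-a) sum_(k <= N) k^(a-1)) = O(N),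
   leaving N^(2-2a)/(1-a)^2 sum_(k <= N) J(k)/k^2. As J * 1 = n^(2a) in the sense
   of Dirichlet convolution, sum_k J(k)/k^2 = zeta(2-2a)/zeta(2), and the tail of
   this series beyond N is O(N^(2a-1)). *)

Section PowerInequalities.
Variable R : realType.
Implicit Types b r x y : R.

Lemma bernoulli_powR_npos b r : b <= 0 -> 0 < r -> 1 + b * (r - 1) <= r `^ b.
Proof.
move=> b0 r0; rewrite /powR gt_eqF //.
apply: le_trans (expR_ge1Dx _); rewrite lerD2l; apply: ler_wnM2l => //.
have := @le_ln1Dx R (r - 1); rewrite (_ : 1 + (r - 1) = r); last by ring.
by apply; lra.
Qed.

Lemma bernoulli_powR_ge1 b r : 1 <= b -> 0 < r -> 1 + b * (r - 1) <= r `^ b.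
Proof.
move=> b1 r0.
have -> : r `^ b = r * (r^-1) `^ (1 - b).
  rewrite -powR_inv1 ?ltW // -powRrM -{2}(powRr1 (ltW r0)) -powRD; last first.
    by apply/implyP => _; rewrite gt_eqF.
  congr (_ `^ _); ring.
have := @bernoulli_powR_npos (1 - b) r^-1; rewrite subr_le0 invr_gt0 => /(_ b1 r0).
rewrite -(ler_pM2l r0); congr (_ <= _); field; exact: lt0r_neq0.
Qed.

Lemma bernoulli_powR_le1 b r : 0 <= b <= 1 -> 0 <= r -> r `^ b <= 1 + b * (r - 1).
Proof.
move=> /andP[b0 b1] r0.
have [->|bn0] := eqVneq b 0; first by rewrite powRr0 mul0r addr0.
have bp : 0 < b by rewrite lt_neqAle eq_sym bn0.
have [->|rn0] := eqVneq r 0; first by rewrite powR0 //; lra.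
have rp : 0 < r by rewrite lt_neqAle eq_sym rn0.
have zp : 0 < r `^ b by rewrite powR_gt0.
have := @bernoulli_powR_ge1 b^-1 _ (ltac:(by rewrite invf_ge1)) zp.
rewrite -powRrM mulfV // powRr1 // -(ler_pM2l bp).
rewrite mulrDr mulr1 mulrA mulfV // mul1r; lra.
Qed.

Lemma powR_homogeneous b {x} y : 0 < x -> 0 <= y -> y `^ b = x `^ b * (y / x) `^ b.
Proof.
move=> x0 y0; rewrite -powRM; [|exact: ltW|exact: divr_ge0 y0 (ltW x0)].
by rewrite mulrC divfK // gt_eqF.
Qed.

Lemma powR_tangentE b x y : 0 < x ->
  x `^ b + b * x `^ (b - 1) * (y - x) = x `^ b * (1 + b * (y / x - 1)).
Proof.
move=> x0; rewrite powRB; last by apply/implyP => _; rewrite gt_eqF.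
by rewrite powRr1 ?ltW //; field; rewrite gt_eqF.
Qed.

Lemma powR_le_tangent b x y : 0 <= b <= 1 -> 0 < x -> 0 <= y ->
  y `^ b <= x `^ b + b * x `^ (b - 1) * (y - x).
Proof.
move=> bb x0 y0; rewrite powR_tangentE // (powR_homogeneous b y x0 y0).
rewrite ler_pM2l ?powR_gt0 //; apply: bernoulli_powR_le1 => //.
exact: divr_ge0 y0 (ltW x0).
Qed.

Lemma powR_ge_tangent b x y : b <= 0 -> 0 < x -> 0 < y ->
  x `^ b + b * x `^ (b - 1) * (y - x) <= y `^ b.
Proof.
move=> b0 x0 y0; rewrite powR_tangentE // (powR_homogeneous b y x0 (ltW y0)).
rewrite ler_pM2l ?powR_gt0 //; apply: bernoulli_powR_npos => //.
exact: divr_gt0.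
Qed.

End PowerInequalities.

Definition psum {R : realType} (f : nat -> R) (n : nat) : R := \sum_(1 <= k < n) f k.

Definition zeta_term {R : realType} (s : R) (k : nat) : R := k%:R `^ (- s).

Section PartialSums.
Variable R : realType.
Implicit Types s : R.

Lemma psum_nat_recr (f : nat -> R) n : psum f n.+2 = psum f n.+1 + f n.+1.
Proof. by rewrite /psum big_nat_recr. Qed.

Lemma psum_sub (f : nat -> R) m n : (0 < m <= n)%N ->
  psum f n - psum f m = \sum_(m <= k < n) f k.
Proof.
by case/andP=> m0 mn; rewrite /psum (big_cat_nat _ (n := m)) //= addrAC subrr add0r.
Qed.

Lemma psum_nondecreasing (f : nat -> R) : (forall k, (0 < k)%N -> 0 <= f k) ->
  nondecreasing_seq (psum f).
Proof.
move=> f0 n m nm; rewrite /psum.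
case: n nm => [|n] nm.
  by rewrite big_geq // big_nat_cond sumr_ge0 // => i /andP[/andP[i1 _] _]; apply: f0.
rewrite (big_cat_nat _ (n := n.+1) (m := 1%N) (p := m)) //= lerDl.
rewrite big_nat_cond sumr_ge0 // => i /andP[/andP[ni _] _]; apply: f0.
exact: leq_ltn_trans ni.
Qed.

Lemma psum_bounded_cvg (f : nat -> R) (B : R) : (forall k, (0 < k)%N -> 0 <= f k) ->
  (forall n, psum f n <= B) ->
  [/\ cvgn (psum f), (forall n, psum f n <= limn (psum f)) & limn (psum f) <= B].
Proof.
move=> f0 fB; have nd := psum_nondecreasing _ f0.
have cv : cvgn (psum f) by apply: nondecreasing_is_cvgn => //; exists B => _ [n _ <-].
split => //; first exact: nondecreasing_cvgn_le.
by apply: limr_le => //; apply: nearW.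
Qed.

Lemma zeta_psum_bounds_lt1 s M : 0 < s < 1 ->
  (M%:R + 1) `^ (1 - s) - 1 <= (1 - s) * psum (zeta_term s) M.+1 <= M%:R `^ (1 - s).
Proof.
move=> /andP[s0 s1]; set b := 1 - s.
have bb : 0 <= b <= 1 by rewrite /b; apply/andP; split; lra.
rewrite /zeta_term (_ : - s = b - 1); last by rewrite /b; ring.
elim: M => [|M /andP[IH1 IH2]].
  rewrite /psum big_geq // mulr0 add0r powR1 subrr lexx /=.
  by rewrite powR0 // gt_eqF // /b; lra.
rewrite psum_nat_recr -natr1.
have x0 : 0 < (M%:R + 1 : R) by rewrite natr1 ltr0Sn.
have := @powR_le_tangent _ _ _ (M%:R) bb x0 (ler0n _ M).
have := @powR_le_tangent _ _ _ (M%:R + 1 + 1) bb x0 (ltac:(by rewrite !natr1 ler0n)).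
by move=> H1 H2; apply/andP; split; lra.
Qed.

Lemma zeta_psum_floor_bounds s y M : 0 < s < 1 -> M%:R <= y <= M%:R + 1 ->
  y `^ (1 - s) - 1 <= (1 - s) * psum (zeta_term s) M.+1 <= y `^ (1 - s).
Proof.
move=> s01 /andP[My yM]; have /andP[s0 s1] := s01.
have bb : 0 <= 1 - s by lra.
have y0 : 0 <= y by apply: le_trans My.
have lo := ge0_ler_powR bb (ler0n _ M) y0 My.
have M1 : 0 <= (M%:R + 1 : R) by rewrite natr1 ler0n.
have hi := ge0_ler_powR bb y0 M1 yM.
by have /andP[l h] := zeta_psum_bounds_lt1 s M s01; apply/andP; split; lra.
Qed.

Lemma sum_zeta_term_tail s N d : 1 < s -> (0 < N)%N ->
  (s - 1) * \sum_(N.+1 <= k < (N + d).+1) zeta_term s k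
    <= N%:R `^ (1 - s) - (N + d)%:R `^ (1 - s).
Proof.
move=> s1 N0; elim: d => [|d IH]; first by rewrite addn0 big_geq // mulr0 subrr.
rewrite addnS big_nat_recr /=; last by rewrite ltnS leq_addr.
rewrite /zeta_term -[((N + d).+1)%:R]natr1.
have x0 : 0 < ((N + d)%:R + 1 : R) by rewrite natr1 ltr0Sn.
have y0 : 0 < ((N + d)%:R : R) by rewrite ltr0n addn_gt0 N0.
have := @powR_ge_tangent _ (1 - s) _ _ (ltac:(lra)) x0 y0.
rewrite (_ : 1 - s - 1 = - s); last by ring.
move=> H; lra.
Qed.

Lemma zeta_psum_tail s N M : 1 < s -> (0 < N)%N -> (N < M)%N ->
  psum (zeta_term s) M - psum (zeta_term s) N.+1 <= N%:R `^ (1 - s) / (s - 1).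
Proof.
move=> s1 N0 NM; have [d ->] : exists d, M = (N + d).+1 by exists (M - N.+1)%N; lia.
rewrite psum_sub ?ltnS ?leq_addr // ler_pdivlMr; last lra.
have := sum_zeta_term_tail _ _ d s1 N0.
by have := powR_ge0 ((N + d)%:R : R) (1 - s); lra.
Qed.

Lemma zeta_psum_le s n : 1 < s -> psum (zeta_term s) n <= 1 + (s - 1)^-1.
Proof.
move=> s1; have s0 : 0 < (s - 1)^-1 by rewrite invr_gt0; lra.
case: n => [|[|n]]; try by rewrite /psum big_geq //; lra.
have := zeta_psum_tail s 1 n.+2 s1 isT isT.
by rewrite /psum big_nat1 /zeta_term powR1 mul1r; lra.
Qed.

Lemma zeta_term_ge0 s k : 0 <= zeta_term s k.
Proof. exact: powR_ge0. Qed.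

Lemma zeta_psum_cvg s : 1 < s ->
  cvgn (psum (zeta_term s)) /\ forall n, psum (zeta_term s) n <= zeta_real s.
Proof.
move=> s1; have [cv le _] := psum_bounded_cvg _ _ (fun k _ => zeta_term_ge0 s k)
  (fun n => zeta_psum_le s n s1).
by split.
Qed.

Lemma zeta_real_ge1 s : 1 < s -> 1 <= zeta_real s.
Proof.
move=> /zeta_psum_cvg[_ /(_ 2%N)].
by rewrite /psum big_nat1 /zeta_term powR1.
Qed.

End PartialSums.

Definition jordan_totient {R : realType} (t : R) (k : nat) : R :=
  k%:R `^ t * \prod_(p <- primes k) (1 - p%:R `^ (- t)).

Section JordanTotient.
Variable R : realType.
Variable t : R.
Local Notation J := (jordan_totient t).

Lemma jordan_totient1 : J 1 = 1.
Proof. by rewrite /jordan_totient /= mulr1n powR1 mul1r big_nil. Qed.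

Lemma jordan_totient_ge0_le k : 0 < t -> 0 <= J k <= k%:R `^ t.
Proof.
move=> t0; rewrite /jordan_totient.
have F p : p \in primes k -> 0 <= 1 - p%:R `^ (- t) <= 1.
  rewrite mem_primes => /andP[/prime_gt0 p0 _].
  rewrite lerBrDl addr0 gerBl powR_ge0 andbT powRN invf_le1 ?powR_gt0 ?ltr0n //.
  have p1 : 1 <= (p%:R : R) by rewrite ler1n.
  by have := ler_powR p1 (ltW t0); rewrite powRr0.
have P0 : 0 <= \prod_(p <- primes k) (1 - p%:R `^ (- t)).
  by rewrite big_seq; apply: prodr_ge0 => p /F /andP[].
have P1 : \prod_(p <- primes k) (1 - p%:R `^ (- t)) <= 1.
  by rewrite big_seq; apply: prodr_ile1.
rewrite mulr_ge0 ?powR_ge0 //=.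
by rewrite -[X in _ <= X]mulr1 ler_wpM2l ?powR_ge0.
Qed.

Lemma jordan_totient_mul_prime p d : prime p -> (0 < d)%N ->
  J (p * d) = (if (p %| d)%N then p%:R `^ t else p%:R `^ t - 1) * J d.
Proof.
move=> pp d0; rewrite /jordan_totient natrM powRM ?ler0n //.
have p0 := prime_gt0 pp.
have pt0 : (p%:R : R) `^ t != 0 by rewrite gt_eqF // powR_gt0 // ltr0n.
case: ifP => pd.
  rewrite (perm_big (primes d)) ?mulrA //.
  apply: uniq_perm; rewrite ?primes_uniq // => q.
  rewrite !mem_primes muln_gt0 p0 d0 /=.
  case pq: (prime q) => //=; rewrite Euclid_dvdM // dvdn_prime2 //.
  by case: eqP => //= ->; rewrite pd.
rewrite (perm_big (p :: primes d)) ?big_cons.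
  by rewrite /= powRN; set P := \prod_(_ <- _) _; field.
apply: uniq_perm; rewrite ?primes_uniq //=.
  by rewrite primes_uniq mem_primes pd !andbF.
move=> q; rewrite in_cons !mem_primes muln_gt0 p0 d0 /=.
case pq: (prime q); rewrite ?andbF ?orbF //=.
  by rewrite Euclid_dvdM // dvdn_prime2.
by case: (eqVneq q p) => [E|//]; rewrite E pp in pq.
Qed.

End JordanTotient.

Section DivisorSums.
Variable V : nmodType.
Implicit Types F u : nat -> V.

Lemma sum_multiples u k L : (0 < k)%N ->
  \sum_(1 <= m < L.+1 | (k %| m)%N) u m = \sum_(1 <= a < (L %/ k).+1) u (k * a)%N.
Proof.
move=> k0; elim: L => [|L IH]; first by rewrite div0n !big_geq.
rewrite big_mkcond big_nat_recr //= -big_mkcond IH divnS //.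
case: ifP => kd /=; last by rewrite addr0.
rewrite add1n [RHS]big_nat_recr //=; congr (_ + _).
have E : (L.+1 %/ k = (L %/ k).+1)%N by rewrite divnS // kd.
by rewrite -E mulnC divnK.
Qed.

Lemma sum_divisors_widen F (Q : pred nat) n K : (0 < n)%N -> (n < K)%N ->
  (forall d, Q d -> (d %| n)%N) ->
  \sum_(1 <= d < K | Q d) F d = \sum_(1 <= d < n.+1 | Q d) F d.
Proof.
move=> n0 nK Qn; rewrite (big_cat_nat _ (n := n.+1)) //= [X in _ + X]big_nat_cond.
rewrite [X in _ + X]big1 ?addr0 // => d /andP[/andP[nd _] /Qn dn].
by have := dvdn_leq n0 dn; rewrite leqNgt nd.
Qed.

End DivisorSums.

Lemma sum_divisors_jordan_totient {R : realType} (t : R) n K : (0 < n)%N -> (n < K)%N ->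
  \sum_(1 <= d < K | (d %| n)%N) jordan_totient t d = n%:R `^ t.
Proof.
elim/ltn_ind: n K => n IH K n0 nK.
rewrite (@sum_divisors_widen _ _ _ _ _ n0 nK) //.
have [n1|n1] := leqP n 1.
  have -> : n = 1%N by lia.
  by rewrite big_mkcond big_nat1 /= jordan_totient1 powR1.
set p := pdiv n; have pp : prime p by exact: pdiv_prime.
set n' := (n %/ p)%N.
have En : n = (p * n')%N by rewrite mulnC divnK // pdiv_dvd.
have n'0 : (0 < n')%N by rewrite divn_gt0 ?prime_gt0 // pdiv_leq.
have n'n : (n' < n)%N by apply: ltn_Pdiv => //; exact: prime_gt1.
(* With n = p n', the divisors of n prime to p are those of n', and
   jordan_totient_mul_prime folds the others, p a, back onto divisors a of n'. *)
rewrite (bigID (fun d => (p %| d)%N)) /=.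
have S2 : \sum_(1 <= d < n.+1 | (d %| n)%N && ~~ (p %| d)%N) jordan_totient t d =
          \sum_(1 <= d < n'.+1 | (d %| n')%N && ~~ (p %| d)%N) jordan_totient t d.
  rewrite -(@sum_divisors_widen _ _ _ _ n.+1 n'0) ?ltnS 1?ltnW //; last first.
    by move=> d /andP[].
  apply: eq_bigl => d; case pd: (p %| d)%N; rewrite ?andbF ?andbT //.
  by rewrite En Gauss_dvdr // coprime_sym prime_coprime // pd.
have S1 : \sum_(1 <= d < n.+1 | (d %| n)%N && (p %| d)%N) jordan_totient t d =
   \sum_(1 <= a < n'.+1) (if (a %| n')%N then
       (if (p %| a)%N then p%:R `^ t else p%:R `^ t - 1) * jordan_totient t a else 0).
  rewrite big_mkcondl /= sum_multiples ?prime_gt0 // -/n'.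
  apply: eq_big_nat => a /andP[a0 _].
  rewrite {1}En dvdn_pmul2l ?prime_gt0 //.
  by case: ifP => // _; rewrite jordan_totient_mul_prime.
rewrite S1 S2 En natrM powRM ?ler0n // -/n' -(IH n' n'n n'.+1) //.
rewrite big_mkcond [X in _ + X]big_mkcond [X in _ * X]big_mkcond -big_split mulr_sumr /=.
apply: eq_big_nat => a _.
by case: (a %| n')%N; case: (p %| a)%N => /=; ring.
Qed.

Section GcdSum.
Variable R : realType.
Variable a : R.
Local Notation J := (jordan_totient (2 * a)).
Local Notation z := (zeta_term a).

Lemma gcd_powR_divisor_sum N m n : (1 <= m <= N)%N -> (1 <= n <= N)%N ->
  (gcdn m n)%:R `^ (2 * a) / (m * n)%:R `^ a =
  \sum_(1 <= k < N.+1) J k * ((if (k %| m)%N then z m else 0) * (if (k %| n)%N then z n else 0)).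
Proof.
move=> /andP[m0 mN] /andP[n0 nN].
have g0 : (0 < gcdn m n)%N by rewrite gcdn_gt0 m0.
have gN : (gcdn m n < N.+1)%N by rewrite ltnS (leq_trans (dvdn_leq m0 (dvdn_gcdl m n))).
rewrite -(@sum_divisors_jordan_totient _ (2 * a) _ _ g0 gN) big_mkcond mulr_suml.
apply: eq_bigr => k _; rewrite dvdn_gcd.
have -> : ((m * n)%:R `^ a)^-1 = z m * z n.
  by rewrite natrM powRM ?ler0n // invfM -!powRN.
by case: (k %| m)%N; case: (k %| n)%N => /=; rewrite ?mul0r ?mulr0.
Qed.

Lemma sum_multiples_zeta_term N k : (0 < k)%N ->
  \sum_(1 <= m < N.+1) (if (k %| m)%N then z m else 0) = z k * psum z (N %/ k).+1.
Proof.
move=> k0; rewrite -big_mkcond sum_multiples // /psum mulr_sumr.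
by apply: eq_bigr => b _; rewrite /zeta_term natrM powRM ?ler0n.
Qed.

Lemma gcd_sum_jordanE N :
  \sum_(1 <= m < N.+1) \sum_(1 <= n < N.+1) (gcdn m n)%:R `^ (2 * a) / (m * n)%:R `^ a =
  \sum_(1 <= k < N.+1) J k * (z k * psum z (N %/ k).+1) ^+ 2.
Proof.
transitivity (\sum_(1 <= m < N.+1) \sum_(1 <= n < N.+1) \sum_(1 <= k < N.+1)
    J k * ((if (k %| m)%N then z m else 0) * (if (k %| n)%N then z n else 0))).
  apply: eq_big_nat => m /andP[m0 mN]; apply: eq_big_nat => n /andP[n0 nN].
  by apply: gcd_powR_divisor_sum; apply/andP; split.
under eq_bigr => m _ do rewrite exchange_big /=.
rewrite exchange_big /=; apply: eq_big_nat => k /andP[k0 _].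
under eq_bigr => m _ do rewrite -mulr_sumr -mulr_sumr.
by rewrite -mulr_sumr -mulr_suml sum_multiples_zeta_term // expr2.
Qed.

End GcdSum.

Definition jordan_coef {R : realType} (t : R) (k : nat) : R :=
  jordan_totient t k * (k%:R^-1) ^+ 2.

Section JordanSeries.
Variable R : realType.
Variable t : R.
Hypothesis t01 : 0 < t < 1.
Local Notation A := (psum (jordan_coef t)).
Local Notation B := (psum (@zeta_term R 2)).
Local Notation C := (psum (zeta_term (2 - t))).

Lemma zeta_term2E k : @zeta_term R 2 k = (k%:R^-1) ^+ 2.
Proof. by rewrite /zeta_term powR_invn ?ler0n // exprVn. Qed.

Lemma zeta_term_sub2E k : (0 < k)%N -> zeta_term (2 - t) k = k%:R `^ t * (k%:R^-1) ^+ 2.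
Proof.
move=> k0; rewrite -zeta_term2E /zeta_term -powRD; last first.
  by apply/implyP => _; rewrite pnatr_eq0 -lt0n.
by congr (_ `^ _); ring.
Qed.

Lemma jordan_coef_ge0_le k : (0 < k)%N -> 0 <= jordan_coef t k <= zeta_term (2 - t) k.
Proof.
have /andP[t0 _] := t01; move=> k0; rewrite /jordan_coef zeta_term_sub2E //.
have /andP[h0 h1] := @jordan_totient_ge0_le _ t k t0.
have e0 : 0 <= ((k%:R : R)^-1) ^+ 2 by rewrite exprn_ge0 // invr_ge0 ler0n.
by rewrite mulr_ge0 //= ler_wpM2r.
Qed.

Lemma jordan_coef_ge0 k : (0 < k)%N -> 0 <= jordan_coef t k.
Proof. by move=> /jordan_coef_ge0_le /andP[]. Qed.

Lemma zeta_psum_dirichlet M : C M.+1 = \sum_(1 <= k < M.+1) jordan_coef t k * B (M %/ k).+1.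
Proof.
rewrite /psum; transitivity (\sum_(1 <= n < M.+1) \sum_(1 <= k < M.+1)
   (if (k %| n)%N then jordan_totient t k * ((n%:R : R)^-1) ^+ 2 else 0)).
  apply: eq_big_nat => n /andP[n0 nM].
  rewrite zeta_term_sub2E // -(@sum_divisors_jordan_totient _ t n M.+1) //.
  by rewrite -big_mkcond mulr_suml.
rewrite exchange_big /=; apply: eq_big_nat => k /andP[k0 _].
rewrite -big_mkcond sum_multiples // /jordan_coef -mulrA mulr_sumr.
rewrite [RHS]mulr_sumr; apply: eq_bigr => a _.
by rewrite zeta_term2E natrM invfM exprMn.
Qed.

Lemma jordan_psum_cvg : cvgn A /\ forall n, A n <= limn A.
Proof.
have s1 : 1 < 2 - t by case/andP: t01 => *; lra.
have AC n : A n <= C n.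
  rewrite /psum big_nat_cond [X in _ <= X]big_nat_cond.
  by apply: ler_sum => k /andP[/andP[/jordan_coef_ge0_le/andP[]]].
have [cv le _] := @psum_bounded_cvg _ _ _ jordan_coef_ge0
  (fun n => le_trans (AC n) (@zeta_psum_le _ _ n s1)).
by split.
Qed.

Lemma jordan_series_ge1 : 1 <= limn A.
Proof.
have [_ /(_ 2%N)] := jordan_psum_cvg.
by rewrite /psum big_nat1 /jordan_coef jordan_totient1 invr1 expr1n mulr1.
Qed.

Let B_cvg : cvgn B /\ forall n, B n <= limn B.
Proof. by apply: zeta_psum_cvg; lra. Qed.

Let C_cvg : cvgn C.
Proof. by case: (@zeta_psum_cvg _ (2 - t) (ltac:(case/andP: t01 => *; lra))). Qed.

Lemma zeta_le_jordan_mul : limn C <= limn A * limn B.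
Proof.
have [_ leA] := jordan_psum_cvg; have [_ leB] := B_cvg.
have A1 := jordan_series_ge1; have B1 : 1 <= limn B by apply: zeta_real_ge1; lra.
apply: limr_le => //; apply: nearW => -[|M].
  by rewrite /psum big_geq // mulr_ge0 // (le_trans ler01).
rewrite zeta_psum_dirichlet.
apply: (@le_trans _ _ (A M.+1 * limn B)).
  rewrite /psum mulr_suml big_nat_cond [X in _ <= X]big_nat_cond.
  apply: ler_sum => k /andP[/andP[k0 _] _].
  by apply: ler_wpM2l; [exact: jordan_coef_ge0 | exact: leB].
by rewrite ler_wpM2r ?leA // (le_trans ler01).
Qed.

(* For M >= K L the terms k <= K of the expansion of C (M + 1) have M / k >= L. *)
Lemma psum_jordan_mul_le_zeta K L : (0 < K)%N -> (0 < L)%N -> A K.+1 * B L.+1 <= limn C.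
Proof.
move=> K0 L0; have ndB := @psum_nondecreasing _ _ (fun k _ => @zeta_term_ge0 R 2 k).
apply: limr_ge => //; apply: filterS (nbhs_infty_ge (K * L).+1) => -[//|M] /= ML.
have KM : (K <= M)%N by nia.
rewrite zeta_psum_dirichlet (big_cat_nat _ (n := K.+1)) //=.
apply: (@le_trans _ _ (\sum_(1 <= k < K.+1) jordan_coef t k * B (M %/ k).+1)); last first.
  rewrite lerDl big_nat_cond sumr_ge0 // => k /andP[/andP[k0 _] _].
  rewrite mulr_ge0 ?jordan_coef_ge0 ?(leq_trans _ k0) //.
  by apply: le_trans (ndB 0%N _ (leq0n _)); rewrite /psum big_geq.
rewrite /psum mulr_suml big_nat_cond [X in _ <= X]big_nat_cond.
apply: ler_sum => k /andP[/andP[k1 kK] _].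
apply: ler_wpM2l; first exact: jordan_coef_ge0.
apply: ndB; rewrite ltnS (leq_trans _ (leq_div2l M k1 kK)) //.
by rewrite leq_divRL // mulnC.
Qed.

Lemma jordan_mul_le_zeta : limn A * limn B <= limn C.
Proof.
have ndA := @psum_nondecreasing _ _ jordan_coef_ge0.
have ndB := @psum_nondecreasing _ _ (fun k _ => @zeta_term_ge0 R 2 k).
have [cvA _] := jordan_psum_cvg; have [cvB _] := B_cvg.
have B_pos L : 0 < B L.+2.
  have B2 : B 2 = 1 by rewrite /psum big_nat1 /zeta_term powR1.
  by have := ndB 2%N L.+2 isT; rewrite B2; apply: lt_le_trans.
have A_lim_le L : limn A * B L.+2 <= limn C.
  rewrite -ler_pdivlMr //; apply: limr_le => //; apply: nearW => n.
  rewrite ler_pdivlMr //; apply: le_trans (psum_jordan_mul_le_zeta n.+1 L.+1 isT isT).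
  by apply: ler_wpM2r; [exact: ltW | apply: ndA; exact: leqW (leqnSn n)].
have A_pos : 0 < limn A by apply: lt_le_trans jordan_series_ge1.
rewrite mulrC -ler_pdivlMr //; apply: limr_le => //; apply: nearW => n.
rewrite ler_pdivlMr // mulrC; apply: le_trans (A_lim_le n).
by apply: ler_wpM2l; [exact: ltW | apply: ndB; exact: leqW (leqnSn n)].
Qed.

Lemma zeta_jordan : zeta_real (2 - t) = limn A * zeta_real 2.
Proof. by apply/le_anti; rewrite zeta_le_jordan_mul jordan_mul_le_zeta. Qed.

Lemma jordan_series_tail N : (0 < N)%N ->
  0 <= limn A - A N.+1 <= N%:R `^ (t - 1) / (1 - t).
Proof.
move=> N0; have /andP[t0 t1] := t01.
have [cvA leA] := jordan_psum_cvg.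
have ndA := @psum_nondecreasing _ _ jordan_coef_ge0.
rewrite subr_ge0 leA /= lerBlDl; apply: limr_le => //; apply: nearW => M.
have [MN|NM] := leqP M N.+1.
  apply: le_trans (ndA _ _ MN) _.
  by rewrite lerDl divr_ge0 ?powR_ge0 //; lra.
rewrite -lerBlDl; apply: (@le_trans _ _ (C M - C N.+1)).
  rewrite !psum_sub ?(ltnW NM) //; apply: ler_sum_nat => k /andP[k1 _].
  by have /andP[] := jordan_coef_ge0_le k (leq_trans (ltn0Sn N) k1).
have E1 : 1 - (2 - t) = t - 1 by ring.
have E2 : 2 - t - 1 = 1 - t by ring.
by have := @zeta_psum_tail _ (2 - t) N M (ltac:(lra)) N0 (ltnW NM); rewrite E1 E2.
Qed.

End JordanSeries.

Lemma sqr_sub_sqr_bounds {R : realDomainType} (X Y : R) : 0 <= X -> Y - 1 <= X <= Y ->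
  0 <= Y ^+ 2 - X ^+ 2 <= 2 * Y.
Proof.
move=> X0 /andP[lo hi].
have P1 : 0 <= (Y - X) * (Y + X) by rewrite mulr_ge0 //; lra.
have P2 : 0 <= (1 - (Y - X)) * (Y + X) by rewrite mulr_ge0 //; lra.
by apply/andP; split; nra.
Qed.

Lemma natr_div_floor_bounds {R : realType} N k : (0 < k)%N ->
  ((N %/ k)%:R : R) <= (N%:R / k%:R : R) <= (N %/ k)%:R + 1.
Proof.
move=> k0; have kp : 0 < (k%:R : R) by rewrite ltr0n.
rewrite ler_pdivlMr // ler_pdivrMr // natr1 -!natrM !ler_nat leq_trunc_div /=.
exact: ltnW (ltn_ceil _ _).
Qed.

Section GcdSumAsymptotics.
Variable R : realType.
Variable a : R.
Hypothesis a01 : 0 < a < 1.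
Local Notation z := (zeta_term a).

Lemma jordan_totient_zeta_term_le1 k : (0 < k)%N ->
  0 <= jordan_totient (2 * a) k * z k ^+ 2 <= 1.
Proof.
move=> k0; have /andP[a0 _] := a01.
have /andP[h0 h1] := @jordan_totient_ge0_le _ (2 * a) k (ltac:(lra)).
have zk : z k ^+ 2 = (k%:R `^ (2 * a))^-1.
  by rewrite /zeta_term powRN exprVn -powR_mulrn ?powR_ge0 // -powRrM mulrC.
have kp : 0 < (k%:R : R) `^ (2 * a) by rewrite powR_gt0 // ltr0n.
by rewrite zk mulr_ge0 ?invr_ge0 ?(ltW kp) //= ler_pdivrMr // mul1r.
Qed.

Lemma gcd_sum_term_err N k : (0 < k)%N ->
  `| jordan_totient (2 * a) k * (z k * psum z (N %/ k).+1) ^+ 2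
     - (N%:R `^ (1 - a)) ^+ 2 / (1 - a) ^+ 2 * jordan_coef (2 * a) k |
  <= 2 / (1 - a) ^+ 2 * (N%:R `^ (1 - a) * zeta_term (1 - a) k).
Proof.
move=> k0; have /andP[a0 a1] := a01.
set F := psum z (N %/ k).+1; set b := 1 - a.
have b0 : b != 0 by rewrite /b; apply/eqP; lra.
have b2 : 0 < b ^+ 2 by rewrite exprn_gt0 // /b; lra.
have /andP[w0 w1] := jordan_totient_zeta_term_le1 k k0.
set w := jordan_totient (2 * a) k * z k ^+ 2.
have := @zeta_psum_floor_bounds _ a _ (N %/ k)%N a01 (natr_div_floor_bounds N k k0).
rewrite powRM ?invr_ge0 ?ler0n // -powR_inv1 ?ler0n // -powRrM mulN1r -/b -/F -/(zeta_term b k).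
set Y := N%:R `^ b * zeta_term b k => XY.
have bF0 : 0 <= b * F.
  by rewrite mulr_ge0 ?sumr_ge0 // => [|i _]; [rewrite /b; lra | exact: zeta_term_ge0].
have /andP[D0 D2] := sqr_sub_sqr_bounds _ _ bF0 XY.
have E1 : jordan_totient (2 * a) k * (z k * F) ^+ 2 = w * F ^+ 2 by rewrite exprMn mulrA.
have E2 : (N%:R `^ b) ^+ 2 / b ^+ 2 * jordan_coef (2 * a) k = w * (Y / b) ^+ 2.
  rewrite /w /Y /jordan_coef /zeta_term.
  have -> : (k%:R : R)^-1 = k%:R `^ (- a) * k%:R `^ (- b).
    rewrite -powRD; last by apply/implyP => _; rewrite pnatr_eq0 -lt0n.
    by rewrite -powR_inv1 ?ler0n //; congr (_ `^ _); rewrite /b; ring.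
  by rewrite !exprMn; field.
rewrite E1 E2 (_ : w * F ^+ 2 - w * (Y / b) ^+ 2
    = - (w * (Y ^+ 2 - (b * F) ^+ 2) / b ^+ 2)); last by field.
rewrite normrN (ger0_norm (divr_ge0 (mulr_ge0 w0 D0) (ltW b2))) ler_pdivrMr //.
rewrite (_ : 2 / b ^+ 2 * Y * b ^+ 2 = 2 * Y); last by field.
by rewrite -[X in _ <= X]mul1r ler_pM // (le_trans D0 D2).
Qed.

Lemma gcd_sum_main_term_err N :
  `| \sum_(1 <= k < N.+1) jordan_totient (2 * a) k * (z k * psum z (N %/ k).+1) ^+ 2
     - (N%:R `^ (1 - a)) ^+ 2 / (1 - a) ^+ 2 * psum (jordan_coef (2 * a)) N.+1 |
  <= 2 / (a * (1 - a) ^+ 2) * N%:R.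
Proof.
have /andP[a0 a1] := a01; set b := 1 - a.
have b01 : 0 < b < 1 by apply/andP; split; rewrite /b; lra.
have b2 : 0 < b ^+ 2 by rewrite exprn_gt0 // /b; lra.
rewrite [psum (jordan_coef _) _]/psum mulr_sumr -sumrB; apply: le_trans (ler_norm_sum _ _ _) _.
apply: (@le_trans _ _
    (\sum_(1 <= k < N.+1) 2 / b ^+ 2 * (N%:R `^ b * zeta_term b k))).
  rewrite big_nat_cond [X in _ <= X]big_nat_cond.
  by apply: ler_sum => k /andP[/andP[k1 _] _]; exact: gcd_sum_term_err.
rewrite -!mulr_sumr -/(psum (zeta_term b) N.+1).
have /andP[_ H] := zeta_psum_bounds_lt1 _ _ N b01.
rewrite (_ : 1 - b = a) in H; last by rewrite /b; ring.
have NN : N%:R `^ b * N%:R `^ a = N%:R :> R.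
  rewrite -powRD; last by rewrite /b subrK oner_eq0.
  by rewrite /b subrK powRr1.
rewrite (_ : 2 / (a * b ^+ 2) * N%:R = 2 / b ^+ 2 * (N%:R `^ b * (N%:R `^ a / a))).
  by rewrite ler_pM2l ?divr_gt0 // ler_wpM2l ?powR_ge0 // ler_pdivlMr // mulrC.
by rewrite mulrA NN; field; rewrite gt_eqF // lt0r_neq0 // /b; lra.
Qed.

Lemma gcd_sum_normalized_err N : a < 1 / 2 -> (0 < N)%N ->
  `| N%:R^-1 * \sum_(1 <= m < N.+1) \sum_(1 <= n < N.+1)
        (gcdn m n)%:R `^ (2 * a) / (m * n)%:R `^ a
     - limn (psum (jordan_coef (2 * a))) / (1 - a) ^+ 2 * N%:R `^ (1 - 2 * a) |
  <= 2 / (a * (1 - a) ^+ 2) + 1 / ((1 - 2 * a) * (1 - a) ^+ 2).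
Proof.
move=> ah N0; have /andP[a0 a1] := a01.
have t01 : 0 < 2 * a < 1 by apply/andP; split; lra.
set b := 1 - a; have b0 : 0 < b by rewrite /b; lra.
have b2 : 0 < b ^+ 2 by rewrite exprn_gt0.
have Np : 0 < (N%:R : R) by rewrite ltr0n.
set L := limn _; set A := psum (jordan_coef (2 * a)) N.+1.
set P := N%:R `^ (1 - 2 * a); have P0 : 0 < P by rewrite powR_gt0.
have NP : (N%:R `^ b) ^+ 2 = P * N%:R.
  rewrite expr2 -powRD; last by apply/implyP => _; rewrite gt_eqF.
  rewrite -{2}(powRr1 (ler0n _ N)) /P -powRD; last by apply/implyP => _; rewrite gt_eqF.
  by congr (_ `^ _); rewrite /b; ring.
have PN : P * N%:R `^ (2 * a - 1) = 1.
  rewrite /P -powRD; last by apply/implyP => _; rewrite gt_eqF.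
  by rewrite (_ : 1 - 2 * a + (2 * a - 1) = 0) ?powRr0 //; ring.
rewrite gcd_sum_jordanE; set S := \sum_(1 <= k < N.+1) _.
have -> : N%:R^-1 * S - L / b ^+ 2 * P
    = N%:R^-1 * (S - (N%:R `^ b) ^+ 2 / b ^+ 2 * A) + P / b ^+ 2 * (A - L).
  by rewrite NP; field; rewrite !gt_eqF.
apply: le_trans (ler_normD _ _) _; apply: lerD.
  rewrite normrM ger0_norm ?invr_ge0 ?ler0n // ler_pdivrMl // [X in _ <= X]mulrC.
  exact: gcd_sum_main_term_err.
have /andP[T0 T1] := @jordan_series_tail _ _ t01 N N0.
rewrite normrM ger0_norm ?divr_ge0 ?(ltW P0) ?(ltW b2) // distrC ger0_norm //.
apply: le_trans (ler_wpM2l (divr_ge0 (ltW P0) (ltW b2)) T1) _.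
have t0 : 1 - 2 * a != 0 by apply/eqP; lra.
rewrite (_ : P / b ^+ 2 * _ = P * N%:R `^ (2 * a - 1) / ((1 - 2 * a) * b ^+ 2)).
  by rewrite PN.
by field; rewrite t0 gt_eqF.
Qed.

End GcdSumAsymptotics.

Theorem mainTheorem3 (R : realType) (alpha : R) :
  0 < alpha -> alpha < 1 / 2 ->
  exists C : R, forall N : nat, (0 < N)%N ->
    `| (N%:R)^-1 *
         (\sum_(1 <= m < N.+1) \sum_(1 <= n < N.+1)
            ((gcdn m n)%:R `^ (2 * alpha) / ((m * n)%:R `^ alpha)))
       - zeta_real (2 - 2 * alpha) / (zeta_real 2 * (1 - alpha) ^+ 2)
           * (N%:R `^ (1 - 2 * alpha)) | <= C.
Proof.
move=> a0 ah.
have a01 : 0 < alpha < 1 by apply/andP; split; lra.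
have t01 : 0 < 2 * alpha < 1 by apply/andP; split; lra.
exists (2 / (alpha * (1 - alpha) ^+ 2) + 1 / ((1 - 2 * alpha) * (1 - alpha) ^+ 2)) => N N0.
have z2 : zeta_real (2 : R) != 0.
  by rewrite gt_eqF // (lt_le_trans ltr01) // zeta_real_ge1 //; lra.
have b0 : 1 - alpha != 0 by apply/eqP; lra.
have -> : zeta_real (2 - 2 * alpha) / (zeta_real 2 * (1 - alpha) ^+ 2)
    = limn (psum (jordan_coef (2 * alpha))) / (1 - alpha) ^+ 2.
  by rewrite zeta_jordan //; field; rewrite z2 b0.
exact: gcd_sum_normalized_err.
Qed.
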